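(* Let $X$ be a Fréchet space and $(\|\cdot\|_k)_{k\ge 1}$ the associated increasing family of seminorms (i.e. $\|x\|_k\le\|x\|_{k+1}$ for all $x\in X$, $k\ge1$). Equip $X$ with the metric \[ d'_X(x,y)=\sum_{k=1}^{\infty}2^{-k}\frac{\|x-y\|_k}{1+\|x-y\|_k}. \] A linear operator $T:X\to X$ is an isometry for $d'_X$ if and only if $\|Tx\|_k=\|x\|_k$ for all $x\in X$ and all $k\in\mathbb{N}$. *)

From HB Require Import structures.
From mathcomp Require Import all_boot all_order all_algebra.
From mathcomp Require Import all_classical all_reals all_analysis.
Set Implicit Arguments. Unset Strict Implicit. Unset Printing Implicit Defensive.
Import Order.TTheory GRing.Theory Num.Theory numFieldNormedType.Exports.
Local Open Scope ring_scope.

Definition seminorm (R : realType) (X : lmodType R) (p : X -> R) : Prop :=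
  (forall x y : X, p (x + y) <= p x + p y) /\
  (forall (a : R) (x : X), p (a *: x) = `|a| * p x).

(* The seminorm ||.||_k (k >= 1) is represented by p (k - 1), so the k-th
   summand (k : nat, starting at 0) carries the weight 2^-(k+1). *)
Definition dprime (R : realType) (X : lmodType R) (p : nat -> X -> R)
  (x y : X) : R :=
  limn (series (fun k : nat =>
          (2 ^+ k.+1)^-1 * (p k (x - y) / (1 + p k (x - y))))).

Definition frechet_seminorms (R : realType) (X : lmodType R)
  (p : nat -> X -> R) : Prop :=
  [/\ (forall k, seminorm (p k)),
      (forall k (x : X), p k x <= p k.+1 x),
      (forall x : X, (forall k, p k x = 0) -> x = 0) &
      (forall u : nat -> X,
        (forall e : R, 0 < e -> exists N : nat, forall m n : nat,
           (N <= m)%N -> (N <= n)%N -> dprime p (u m) (u n) < e) ->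
        exists l : X, ((fun n => dprime p (u n) l) @ \oo --> (0 : R))%classic)].

Definition dprime_isometry (R : realType) (X : lmodType R)
  (p : nat -> X -> R) (T : X -> X) : Prop :=
  forall x y : X, dprime p (T x) (T y) = dprime p x y.

From HB Require Import structures.
From mathcomp Require Import all_boot all_order all_algebra.
From mathcomp Require Import all_classical all_reals all_analysis.
From mathcomp Require Import ring lra.
Import Order.TTheory GRing.Theory Num.Theory numFieldNormedType.Exports.
Local Open Scope ring_scope.

(* If T is a d'-isometry then, T being linear, d'(T(tx), 0) = d'(tx, 0) for
   every t >= 0. With a_k = ||Tx||_k and b_k = ||x||_k this says that the point
   masses 2^-(k+1) at the a_k and at the b_k integrate every s |-> ts/(1+ts),
   hence every Stieltjes kernel (1+ts)^-1, alike; by partial fractions they then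
   also agree on every product prod_(i<j) (1+(T+i)s)^-1. If a and b first differ
   at m, say a_m < b_m, the product with T = 1/b_m and j large is decreasing and
   more than twice as large at a_m as at b_m. Since b is nondecreasing and the
   weights beyond m add up to the weight at m, the two integrals cannot agree. *)

Section Seminorm.
Context {R : realType} {X : lmodType R} (q : X -> R).
Hypothesis q_seminorm : seminorm q.

Lemma seminorm0 : q 0 = 0.
Proof. by case: q_seminorm => _ qZ; rewrite -(scale0r (0 : X)) qZ normr0 mul0r. Qed.

Lemma seminormN x : q (- x) = q x.
Proof. by case: q_seminorm => _ qZ; rewrite -scaleN1r qZ normrN normr1 mul1r. Qed.

Lemma seminorm_ge0 x : 0 <= q x.
Proof.
case: q_seminorm => qD _; have := qD x (- x).
rewrite subrr seminorm0 seminormN; lra.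
Qed.

Lemma seminormZ_ge0 t x : 0 <= t -> q (t *: x) = t * q x.
Proof. by case: q_seminorm => _ qZ t0; rewrite qZ ger0_norm. Qed.

End Seminorm.

Lemma exists_expr_gt {R : archiRealFieldType} (M r : R) :
  1 < r -> exists n, M < r ^+ n.
Proof.
move=> r1; have r0 : 0 < r by exact: lt_trans r1.
have z1 : `|r^-1| < 1 by rewrite ger0_norm ?invr_ge0 ?ltW // invf_lt1.
have M1 : 0 < Num.max M 1 by rewrite lt_max ltr01 orbT.
have M1V : 0 < (Num.max M 1)^-1 by rewrite invr_gt0.
have [N _ /(_ N (leqnn N))] := cvgr0_norm_lt _ (cvg_expr z1) _ M1V.
rewrite /= ger0_norm ?exprn_ge0 ?invr_ge0 ?ltW // exprVn.
rewrite ltf_pV2 ?posrE ?exprn_gt0 // => ltMN.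
by exists N; apply: le_lt_trans ltMN; rewrite le_max lexx.
Qed.

Section DyadicSeries.
Context {R : realType}.

Definition dweight (k : nat) : R := (2 ^+ k.+1)^-1.

Lemma dweight_ge0 k : 0 <= dweight k.
Proof. by rewrite invr_ge0 exprn_ge0. Qed.

Lemma series_dweight n : series dweight n = 1 - (2 ^+ n)^-1.
Proof.
elim: n => [|n IHn]; first by rewrite /series /= big_geq // expr0 invr1 subrr.
by rewrite seriesS IHn /dweight exprS; field; rewrite expf_neq0 ?pnatr_eq0.
Qed.

Lemma is_cvg_series_dweight : cvgn (series dweight).
Proof.
apply: nondecreasing_is_cvgn.
  by apply: nondecreasing_series => n _ _; exact: dweight_ge0.
by exists 1 => _ [n _ <-]; rewrite series_dweight lerBlDr lerDl invr_ge0 exprn_ge0.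
Qed.

Definition dseries (c : nat -> R) (h : R -> R) : nat -> R :=
  series (fun k => dweight k * h (c k)).

Definition ratio_series (c : nat -> R) (t : R) : R :=
  limn (dseries c (fun s => t * s / (1 + t * s))).

Lemma is_cvg_dseries c h : (forall k, 0 <= h (c k) <= 1) -> cvgn (dseries c h).
Proof.
move=> h01; apply: (series_le_cvg (v_ := dweight)) is_cvg_series_dweight.
- by move=> k; rewrite mulr_ge0 ?dweight_ge0 //; case/andP: (h01 k).
- exact: dweight_ge0.
- by move=> k; rewrite ler_piMr ?dweight_ge0 //; case/andP: (h01 k).
Qed.

Lemma dseries_le_lim c h m : (forall k, 0 <= h (c k)) -> cvgn (dseries c h) ->
  dseries c h m <= limn (dseries c h).
Proof.
move=> h0 ch; apply: (nondecreasing_cvgn_le _ ch).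
by apply: nondecreasing_series => k _ _; rewrite mulr_ge0 ?dweight_ge0.
Qed.

Lemma lim_dseries_le c h m C : cvgn (dseries c h) -> 0 <= C ->
  (forall k, (m <= k)%N -> h (c k) <= C) ->
  limn (dseries c h) <= dseries c h m + (2 ^+ m)^-1 * C.
Proof.
move=> ch C0 hC; apply: limr_le => //; near=> n.
have mn : (m <= n)%N by near: n; exact: nbhs_infty_ge.
rewrite -(subrK (dseries c h m) (dseries c h n)) /dseries sub_series_geq //.
rewrite addrC lerD2l (@le_trans _ _ (\sum_(m <= k < n) dweight k * C)) //.
  apply: ler_sum_nat => k /andP[mk _].
  by rewrite ler_wpM2l ?dweight_ge0 ?hC.
rewrite -big_distrl /= ler_wpM2r // -sub_series_geq // !series_dweight.
have : 0 <= (2 ^+ n)^-1 :> R by rewrite invr_ge0 exprn_ge0.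
lra.
Unshelve. all: by end_near.
Qed.

End DyadicSeries.

Section StieltjesKernel.
Context {R : realType}.

Definition stieltjes (t s : R) : R := (1 + t * s)^-1.

Definition stieltjes_prod (T : R) (j : nat) (s : R) : R :=
  \prod_(i < j) stieltjes (T + i%:R) s.

Lemma stieltjes_den_gt0 {t s : R} : 0 <= t -> 0 <= s -> 0 < 1 + t * s.
Proof. by move=> t0 s0; rewrite ltr_pwDl // mulr_ge0. Qed.

Lemma stieltjes_gt0 t s : 0 <= t -> 0 <= s -> 0 < stieltjes t s.
Proof. by move=> t0 s0; rewrite invr_gt0 stieltjes_den_gt0. Qed.

Lemma stieltjes_le t s s' : 0 <= t -> 0 <= s <= s' ->
  stieltjes t s' <= stieltjes t s.
Proof.
move=> t0 /andP[s0 ss']; have s'0 := le_trans s0 ss'.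
rewrite lef_pV2 ?posrE ?stieltjes_den_gt0 //.
by rewrite lerD2l ler_wpM2l.
Qed.

Lemma stieltjes_ratio u a b : 0 <= a <= b -> 1 <= u * b ->
  (2 * b / (a + b)) * stieltjes u b <= stieltjes u a.
Proof.
move=> /andP[a0 ab] ub.
have b0 : 0 < b.
  rewrite lt_neqAle (le_trans a0 ab) andbT; apply: contraTneq ub => <-.
  by rewrite mulr0 ler10.
have u0 : 0 <= u by rewrite -(pmulr_lge0 _ b0) (le_trans ler01).
have ab0 : 0 < a + b by rewrite ltr_pwDr.
rewrite /stieltjes -/(_ / (1 + u * b)) ler_pdivrMr ?stieltjes_den_gt0 ?(ltW b0) //.
rewrite ler_pdivrMr // -mulrA ler_pdivlMl ?stieltjes_den_gt0 //.
have : 0 <= (b - a) * (u * b - 1) by rewrite mulr_ge0 // subr_ge0.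
nra.
Qed.

Lemma stieltjes_prod_gt0 T j s : 0 <= T -> 0 <= s -> 0 < stieltjes_prod T j s.
Proof.
move=> T0 s0; apply: prodr_gt0 => i _.
by rewrite stieltjes_gt0 // addr_ge0.
Qed.

Lemma stieltjes_prod_le T j s s' : 0 <= T -> 0 <= s <= s' ->
  stieltjes_prod T j s' <= stieltjes_prod T j s.
Proof.
move=> T0 /andP[s0 ss']; apply: ler_prod => i _.
have Ti0 : 0 <= T + i%:R by rewrite addr_ge0.
by rewrite ltW ?stieltjes_gt0 ?(le_trans s0 ss') ?stieltjes_le ?s0.
Qed.

Lemma stieltjes_prod_ratio T j a b : 0 <= T -> 0 <= a <= b -> 1 <= T * b ->
  (2 * b / (a + b)) ^+ j * stieltjes_prod T j b <= stieltjes_prod T j a.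
Proof.
move=> T0 /andP[a0 ab] Tb; have b0 := le_trans a0 ab.
rewrite -{1}(card_ord j) -prodr_const -big_split /=.
have rho0 : 0 <= 2 * b / (a + b) by rewrite divr_ge0 ?mulr_ge0 ?addr_ge0.
apply: ler_prod => i _; have Ti0 : 0 <= T + i%:R by rewrite addr_ge0.
have Tib : 1 <= (T + i%:R) * b by rewrite mulrDl (le_trans Tb) // lerDl mulr_ge0.
by rewrite mulr_ge0 ?stieltjes_ratio ?a0 ?ab // ltW ?stieltjes_gt0.
Qed.

End StieltjesKernel.

Section RatioSeries.
Context {R : realType} (a b : nat -> R).
Hypotheses (a_ge0 : forall k, 0 <= a k) (b_ge0 : forall k, 0 <= b k).

Definition balanced (h : R -> R) : Prop :=
  [/\ cvgn (dseries a h), cvgn (dseries b h) &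
      limn (dseries a h) = limn (dseries b h)].

Lemma balanced1 : balanced (fun=> 1).
Proof.
have cvg1 c : cvgn (dseries c (fun=> 1)).
  by apply: is_cvg_dseries => k; rewrite ler01 lexx.
by split; rewrite ?cvg1.
Qed.

Lemma balanced_lincomb (c1 c2 : R) {h1 h2 : R -> R} :
  balanced h1 -> balanced h2 -> balanced (fun s => c1 * h1 s + c2 * h2 s).
Proof.
move=> [ca1 cb1 e1] [ca2 cb2 e2]; set h := fun s => _.
have lincombE c : cvgn (dseries c h1) -> cvgn (dseries c h2) ->
    cvgn (dseries c h) /\ (limn (dseries c h) =
      c1 * limn (dseries c h1) + c2 * limn (dseries c h2)).
  have -> : dseries c h = series (c1 *: (fun k => dweight k * h1 (c k)) +
                                  c2 *: (fun k => dweight k * h2 (c k))).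
    congr series; apply/funext => k /=; rewrite !fctE /= mulrDr.
    by congr (_ + _); exact: mulrCA.
  move=> cv1 cv2; split; first by apply: is_cvg_seriesD; apply: is_cvg_seriesZ.
  rewrite lim_seriesD; try by apply: is_cvg_seriesZ.
  by rewrite !lim_seriesZ.
have [cva la] := lincombE a ca1 ca2; have [cvb lb] := lincombE b cb1 cb2.
by split; rewrite // la lb e1 e2.
Qed.

Lemma eq_balanced {h1 h2 : R -> R} : balanced h1 ->
  (forall s, 0 <= s -> h1 s = h2 s) -> balanced h2.
Proof.
move=> + h12; have E c : (forall k, 0 <= c k) -> dseries c h1 = dseries c h2.
  by move=> c0; congr series; apply/funext => k; rewrite h12.
by rewrite /balanced -!E.
Qed.

Hypothesis ratio_balanced :
  forall t, 0 <= t -> ratio_series a t = ratio_series b t.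

Lemma balanced_stieltjes t : 0 <= t -> balanced (stieltjes t).
Proof.
move=> t0.
have ratio_cvg c : (forall k, 0 <= c k) ->
    cvgn (dseries c (fun s => t * s / (1 + t * s))).
  move=> c0; apply: is_cvg_dseries => k; have tc0 : 0 <= t * c k by rewrite mulr_ge0.
  by rewrite divr_ge0 ?addr_ge0 //= ler_pdivrMr ?mul1r ?lerDr ?ltr_pwDl.
have hratio : balanced (fun s => t * s / (1 + t * s)).
  by split; [apply: ratio_cvg|apply: ratio_cvg|apply: ratio_balanced].
apply: (eq_balanced (balanced_lincomb 1 (-1) balanced1 hratio)) => s s0.
have := stieltjes_den_gt0 t0 s0; rewrite /stieltjes => /gt_eqF den0.
by field; rewrite den0.
Qed.

Lemma balanced_stieltjes_prodM T j t : 0 <= T -> 0 <= t ->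
  (forall i, (i < j)%N -> t != T + i%:R) ->
  balanced (fun s => stieltjes_prod T j s * stieltjes t s).
Proof.
move=> T0; elim: j t => [|j IHj] t t0 tT.
  apply: (eq_balanced (balanced_stieltjes t t0)) => s _.
  by rewrite /stieltjes_prod big_ord0 mul1r.
set u := T + j%:R; have u0 : 0 <= u by rewrite addr_ge0.
have tu : t - u != 0 by rewrite subr_eq0 tT.
have bt := IHj t t0 (fun i ij => tT i (ltnW ij)).
have bu : balanced (fun s => stieltjes_prod T j s * stieltjes u s).
  apply: IHj => // i ij; rewrite /u (inj_eq (addrI T)) eqr_nat.
  by rewrite eq_sym neq_ltn ij.
(* (1 + t s)^-1 (1 + u s)^-1 = (t (1 + t s)^-1 - u (1 + u s)^-1) / (t - u) *)
have lc := balanced_lincomb (t / (t - u)) (- (u / (t - u))) bt bu.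
apply: (eq_balanced lc) => s s0.
have /gt_eqF dt := stieltjes_den_gt0 t0 s0.
have /gt_eqF du := stieltjes_den_gt0 u0 s0.
rewrite /stieltjes_prod big_ord_recr /= -/u /stieltjes.
by field; rewrite tu dt du.
Qed.

Lemma balanced_stieltjes_prod T j : 0 <= T -> balanced (stieltjes_prod T j).
Proof.
move=> T0; case: j => [|j].
  by apply: (eq_balanced balanced1) => s _; rewrite /stieltjes_prod big_ord0.
have Tj0 : 0 <= T + j%:R by rewrite addr_ge0.
apply: (eq_balanced (balanced_stieltjes_prodM T j _ T0 Tj0 _)) => [i ij|s _].
  by rewrite (inj_eq (addrI T)) eqr_nat neq_ltn ij orbT.
by rewrite /stieltjes_prod big_ord_recr.
Qed.

Lemma ratio_series_first_diff m : nondecreasing_seq b ->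
  (forall k, (k < m)%N -> a k = b k) -> b m <= a m.
Proof.
move=> b_incr a_eq_b; rewrite leNgt; apply/negP => ab.
have bm0 : 0 < b m by exact: le_lt_trans (a_ge0 m) ab.
set rho := 2 * b m / (a m + b m).
have rho1 : 1 < rho.
  by rewrite ltr_pdivlMr ?mul1r ?ltr_pwDr // mulr_natl mulr2n ltrD2r.
have [j rhoj] := exists_expr_gt 2 rho rho1.
have T0 : 0 <= (b m)^-1 by rewrite invr_ge0 ltW.
have [cvg_a cvg_b lim_ab] := balanced_stieltjes_prod _ j T0.
set h := stieltjes_prod (b m)^-1 j in cvg_a cvg_b lim_ab *.
have h0 s : 0 <= s -> 0 <= h s by move=> s0; rewrite ltW ?stieltjes_prod_gt0.
have head_ab : dseries a h m = dseries b h m.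
  by apply: eq_big_nat => k /andP[_ km]; rewrite a_eq_b.
have lower : dseries b h m + dweight m * h (a m) <= limn (dseries a h).
  apply: le_trans (dseries_le_lim a h m.+1 (fun k => h0 _ (a_ge0 k)) cvg_a).
  by rewrite /dseries seriesS -/(dseries a h m) head_ab addrC.
have upper : limn (dseries b h) <= dseries b h m + (2 ^+ m)^-1 * h (b m).
  apply: lim_dseries_le cvg_b _ _ => [|k mk]; first exact: h0.
  by apply: stieltjes_prod_le; rewrite // b_ge0 b_incr.
have ratio : rho ^+ j * h (b m) <= h (a m).
  by apply: stieltjes_prod_ratio; rewrite ?a_ge0 ?(ltW ab) ?mulVf ?gt_eqF.
have hb0 : 0 < h (b m) by apply: stieltjes_prod_gt0 => //; exact: ltW.
have dweightE : dweight m = (2 ^+ m)^-1 / 2 :> R.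
  by rewrite /dweight exprS invfM mulrC.
(* The weights beyond m add up to dweight m, whence the factor 2. *)
have twice : h (a m) <= 2 * h (b m).
  have q0 : 0 < (2 ^+ m)^-1 :> R by rewrite invr_gt0 exprn_gt0.
  rewrite -(ler_pM2l q0); move: lower upper; rewrite lim_ab dweightE; lra.
have : 2 * h (b m) < rho ^+ j * h (b m) by rewrite ltr_pM2r.
lra.
Qed.

End RatioSeries.

Lemma ratio_series_inj {R : realType} {a b : nat -> R} :
  (forall k, 0 <= a k) -> (forall k, 0 <= b k) ->
  nondecreasing_seq a -> nondecreasing_seq b ->
  (forall t, 0 <= t -> ratio_series a t = ratio_series b t) -> a =1 b.
Proof.
move=> a_ge0 b_ge0 a_incr b_incr ab k; elim/ltn_ind: k => k IHk.
apply/eqP; rewrite eq_le !ratio_series_first_diff // => [t t0|i ik].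
  by rewrite ab.
by rewrite IHk.
Qed.

Lemma dprimeZ0 {R : realType} {X : lmodType R} (p : nat -> X -> R) (x : X) t :
  (forall k, seminorm (p k)) -> 0 <= t ->
  dprime p (t *: x) 0 = ratio_series (fun k => p k x) t.
Proof.
move=> p_seminorm t0; rewrite /dprime subr0; congr (limn (series _)).
by apply/funext => k; rewrite seminormZ_ge0.
Qed.

Theorem lemma1p2 (R : realType) (X : lmodType R) (p : nat -> X -> R)
  (hX : frechet_seminorms p) (T : {linear X -> X}) :
  dprime_isometry p T <-> (forall (x : X) (k : nat), p k (T x) = p k x).
Proof.
case: hX => p_seminorm p_incr _ _.
split=> [T_iso x | T_norm x y]; last first.
  rewrite /dprime -linearB; congr (limn (series _)).
  by apply/funext => k; rewrite T_norm.
have T_ratio t : 0 <= t ->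
    ratio_series (fun k => p k (T x)) t = ratio_series (fun k => p k x) t.
  by move=> t0; have := T_iso (t *: x) 0; rewrite linearZ linear0 !dprimeZ0.
have p_ge0 y k : 0 <= p k y by exact: seminorm_ge0.
have p_incr_at y : nondecreasing_seq (fun k => p k y).
  by apply/nondecreasing_seqP.
exact: ratio_series_inj (p_ge0 _) (p_ge0 _) (p_incr_at _) (p_incr_at _) T_ratio.
Qed.
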